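(* For non-negative integers $p_1,p_2,r$, integers $k_1,k_2$ and $x_1,x_2\in\mathbb{C}$, $$\sum_{j_1=0}^{p_1}\sum_{j_2=0}^{p_2}\sum_{l=0}^{j_1+j_2}\binom{p_1}{j_1}\binom{p_2}{j_2}B^{(k_1)}_{p_1-j_1}(x_1)B^{(k_2)}_{p_2-j_2}(x_2)S(j_1+j_2,l)(-1)^{l}(l+r)!=r!\,B^{(k_1)}_{p_1}(x_1-r-1)\,B^{(k_2)}_{p_2}(x_2-r-1),$$ and the left-hand side also equals $$\sum_{j_1=0}^{p_1}\sum_{j_2=0}^{p_2}\sum_{l=0}^{j_1+j_2}\binom{p_1}{j_1}\binom{p_2}{j_2}B^{(k_1)}_{p_1-j_1}(x_1-1)B^{(k_2)}_{p_2-j_2}(x_2-1)S(j_1+j_2+1,l+1)(-1)^{l}(l+r)!.$$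
   Context: $S(n,l)$ denotes the Stirling numbers of the second kind, $S(n,l)=\frac{1}{l!}\sum_{j=0}^{l}(-1)^j\binom{l}{j}(l-j)^n$ (with $0^0=1$). For an integer $k$, a non-negative integer $n$ and $x\in\mathbb{C}$, the poly-Bernoulli polynomial is $B_{n}^{(k)}(x)=\sum_{l=0}^{n}\frac{1}{(l+1)^{k}}\sum_{j=0}^{l}(-1)^{j}\binom{l}{j}(j+x)^{n}$. *)

From mathcomp Require Import all_boot all_order all_algebra.
From mathcomp Require Import reals.
From mathcomp.real_closed Require Import complex.
Set Implicit Arguments. Unset Strict Implicit. Unset Printing Implicit Defensive.
Import Order.TTheory GRing.Theory Num.Theory.
Local Open Scope ring_scope.

Definition stirling2 {F : fieldType} (n l : nat) : F :=
  (l`!%:R)^-1 * \sum_(0 <= j < l.+1) (-1) ^+ j * 'C(l, j)%:R * ((l - j)%:R) ^+ n.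

Definition polyBernoulli {F : fieldType} (k : int) (n : nat) (x : F) : F :=
  \sum_(0 <= l < n.+1) ((l.+1)%:R ^ k)^-1 *
     \sum_(0 <= j < l.+1) (-1) ^+ j * 'C(l, j)%:R * (j%:R + x) ^+ n.

From mathcomp Require Import all_boot all_order all_algebra.
From mathcomp Require Import ring.
From mathcomp Require Import reals.
From mathcomp.real_closed Require Import complex.
Set Implicit Arguments. Unset Strict Implicit. Unset Printing Implicit Defensive.
Import Order.TTheory GRing.Theory Num.Theory.
Local Open Scope ring_scope.

(* Both identities reduce, by the translation (Appell) property of the
   poly-Bernoulli polynomials, to the one-variable sums
     sum_l S(n,l) (-1)^l (l+r)!     = r! (-(r+1))^n,
     sum_l S(n+1,l+1) (-1)^l (l+r)! = r! (-r)^n.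
   Writing d_l(x) = sum_j (-1)^j C(l,j) (x+j)^n = (-1)^l (Delta^l t^n)(x), one has
   S(n,l) (-1)^l l! = d_l(0), and sum_l C(l+r,r) (-Delta)^l = (1+Delta)^(-r-1)
   is the shift by -(r+1) on polynomials of degree n, which gives both sums. *)

Section AlternatingDifference.
Variable R : comPzRingType.

Definition diff_pow (l n : nat) (x : R) : R :=
  \sum_(0 <= j < l.+1) (-1) ^+ j * 'C(l, j)%:R * (j%:R + x) ^+ n.

Lemma diff_powS l n x :
  diff_pow l n.+1 x = x * diff_pow l n x - l%:R * diff_pow l.-1 n (x + 1).
Proof.
rewrite /diff_pow big_distrr /=.
case: l => [|l]; first by rewrite !big_nat1 mul0r subr0 !expr0 !mul1r add0r exprS.
rewrite /= big_distrr /=.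
have -> : \sum_(0 <= j < l.+2) (-1) ^+ j * 'C(l.+1, j)%:R * (j%:R + x) ^+ n.+1
    = \sum_(0 <= j < l.+2) x * ((-1) ^+ j * 'C(l.+1, j)%:R * (j%:R + x) ^+ n)
    + \sum_(0 <= j < l.+2) (-1) ^+ j * 'C(l.+1, j)%:R * j%:R * (j%:R + x) ^+ n.
  by rewrite -big_split; apply: eq_bigr => j _ /=; rewrite exprS; ring.
congr (_ + _); rewrite [LHS]big_nat_recl //= mulr0 mul0r add0r -sumrN.
apply: eq_bigr => j _.
have binE : l.+1%:R * 'C(l, j)%:R = j.+1%:R * 'C(l.+1, j.+1)%:R :> R.
  by rewrite -!natrM -mul_bin_diag.
have shiftE : j%:R + (x + 1) = j.+1%:R + x :> R by rewrite -natr1; ring.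
rewrite shiftE exprS.
transitivity (- ((-1) ^+ j * (l.+1%:R * 'C(l, j)%:R) * (j.+1%:R + x) ^+ n)).
  by rewrite binE; ring.
ring.
Qed.

Lemma diff_pow0 l x : diff_pow l 0 x = (l == 0%N)%:R.
Proof.
rewrite /diff_pow; under eq_bigr do rewrite expr0 mulr1.
case: l => [|l]; first by rewrite big_nat1 expr0 mulr1.
have := exprDn (1 : R) (-1) l.+1; rewrite subrr expr0n /= => /esym <-.
by rewrite big_mkord; apply: eq_bigr => j _; rewrite expr1n mul1r mulr_natr.
Qed.

Lemma diff_pow_eq0 l n x : (n < l)%N -> diff_pow l n x = 0.
Proof.
elim: n l x => [|n IHn] l x ltnl; first by rewrite diff_pow0; case: l ltnl.
case: l ltnl => [|l] // ltnl.
by rewrite diff_powS !IHn ?mulr0 ?subr0 // ltnW.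
Qed.

Lemma sum_bin_diff_pow r N n x : (n <= N)%N ->
  \sum_(0 <= l < N.+1) 'C(l + r, r)%:R * diff_pow l n x = (x - r.+1%:R) ^+ n.
Proof.
elim: n r N x => [|n IHn] r N x leNn.
  under eq_bigr do rewrite diff_pow0.
  by rewrite big_nat_recl // binn mulr1 big1 ?addr0 // => l _; rewrite mulr0.
case: N leNn => [|N] // leNn.
under eq_bigr do rewrite diff_powS mulrBr.
rewrite sumrB.
have -> : \sum_(0 <= l < N.+2) 'C(l + r, r)%:R * (x * diff_pow l n x)
    = x * (x - r.+1%:R) ^+ n.
  rewrite -(IHn r N.+1 x (ltnW leNn)) big_distrr.
  by apply: eq_bigr => l _; rewrite /= mulrCA.
rewrite (big_nat_recl N.+1) //= mul0r mulr0 add0r.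
have -> : \sum_(0 <= l < N.+1) 'C(l.+1 + r, r)%:R * (l.+1%:R * diff_pow l n (x + 1))
    = r.+1%:R * (x + 1 - r.+2%:R) ^+ n.
  rewrite -(IHn r.+1 N (x + 1) leNn) big_distrr; apply: eq_bigr => l _.
  rewrite /= !mulrA -!natrM mul_bin_left addnS addSn subSn ?leq_addl //.
  by rewrite addnK mulnC.
have -> : x + 1 - r.+2%:R = x - r.+1%:R by rewrite -[r.+2]addn1 natrD; ring.
by rewrite exprS; ring.
Qed.

End AlternatingDifference.

Section PolyBernoulli.
Variable F : fieldType.

Lemma polyBernoulliE k n N (x : F) : (n <= N)%N ->
  polyBernoulli k n x = \sum_(0 <= l < N.+1) ((l.+1)%:R ^ k)^-1 * diff_pow l n x.
Proof.
move=> leNn; rewrite (big_cat_nat _ (n := n.+1)) //= [X in _ = _ + X]big_nat_cond.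
rewrite [X in _ = _ + X]big1 ?addr0 // => l /andP[/andP[ltnl _] _].
by rewrite diff_pow_eq0 ?mulr0.
Qed.

Lemma polyBernoulliD k p (x y : F) :
  \sum_(0 <= j < p.+1) 'C(p, j)%:R * polyBernoulli k (p - j) x * y ^+ j
  = polyBernoulli k p (x + y).
Proof.
transitivity (\sum_(0 <= j < p.+1) \sum_(0 <= l < p.+1) \sum_(0 <= i < l.+1)
    ((l.+1)%:R ^ k)^-1 * ((-1) ^+ i * 'C(l, i)%:R)
    * ('C(p, j)%:R * (i%:R + x) ^+ (p - j) * y ^+ j)).
  apply: eq_bigr => j _; rewrite (polyBernoulliE k x (leq_subr j p)).
  rewrite big_distrr big_distrl; apply: eq_bigr => l _ /=.
  rewrite /diff_pow !big_distrr big_distrl; apply: eq_bigr => i _ /=; ring.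
rewrite exchange_big_nat; apply: eq_bigr => l _.
rewrite exchange_big_nat big_distrr; apply: eq_bigr => i _.
rewrite -big_distrr /= addrA exprDn big_mkord !mulrA; congr (_ * _).
by apply: eq_bigr => j _; rewrite mulr_natl; ring.
Qed.

Lemma sum_bin_polyBernoulli2 (a : nat -> nat -> F) (c y : F) r :
  (forall n, \sum_(0 <= l < n.+1) a n l * (-1) ^+ l * ((l + r)`!)%:R = c * y ^+ n) ->
  forall k1 k2 p1 p2 x1 x2,
  \sum_(0 <= j1 < p1.+1) \sum_(0 <= j2 < p2.+1) \sum_(0 <= l < (j1 + j2).+1)
    'C(p1, j1)%:R * 'C(p2, j2)%:R
    * polyBernoulli k1 (p1 - j1) x1 * polyBernoulli k2 (p2 - j2) x2
    * a (j1 + j2) l * (-1) ^+ l * ((l + r)`!)%:R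
  = c * polyBernoulli k1 p1 (x1 + y) * polyBernoulli k2 p2 (x2 + y).
Proof.
move=> sum_a k1 k2 p1 p2 x1 x2; rewrite -!polyBernoulliD -mulrA big_distrl big_distrr.
apply: eq_bigr => j1 _ /=; rewrite [X in c * X]big_distrr big_distrr.
apply: eq_bigr => j2 _ /=.
transitivity ('C(p1, j1)%:R * 'C(p2, j2)%:R
    * polyBernoulli k1 (p1 - j1) x1 * polyBernoulli k2 (p2 - j2) x2
    * \sum_(0 <= l < (j1 + j2).+1) a (j1 + j2) l * (-1) ^+ l * ((l + r)`!)%:R).
  by rewrite [RHS]big_distrr; apply: eq_bigr => l _; rewrite /= !mulrA.
by rewrite sum_a exprD; ring.
Qed.

End PolyBernoulli.

Section Stirling.
Variable F : numFieldType.

Lemma stirling2E n l : stirling2 n l * (-1) ^+ l * l`!%:R = diff_pow l n (0 : F).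
Proof.
have fact_neq0 : l`!%:R != 0 :> F by rewrite pnatr_eq0 -lt0n fact_gt0.
rewrite /stirling2 mulrAC [_^-1 * _ * _]mulrAC mulVf // mul1r big_distrl big_nat_rev.
apply: eq_big_nat => j /andP[_ ltjl]; rewrite add0n subSS subKn // bin_sub // addr0.
have signE : (-1) ^+ l = (-1) ^+ (l - j) * (-1) ^+ j :> F by rewrite -exprD subnK.
have sign2 : (-1) ^+ (l - j) * (-1) ^+ (l - j) = 1 :> F.
  by rewrite -exprMn mulrNN mulr1 expr1n.
transitivity ((-1) ^+ (l - j) * (-1) ^+ (l - j) * ((-1) ^+ j * 'C(l, j)%:R * j%:R ^+ n) :> F).
  by rewrite /= signE; ring.
by rewrite sign2 mul1r.
Qed.

Lemma fact_addn l r : (l + r)`!%:R = 'C(l + r, r)%:R * r`!%:R * l`!%:R :> F.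
Proof. by rewrite -(bin_fact (leq_addl l r)) addnK !natrM mulrA. Qed.

Lemma sum_stirling2_fact r n :
  \sum_(0 <= l < n.+1) stirling2 n l * (-1) ^+ l * ((l + r)`!)%:R
  = r`!%:R * (- r.+1%:R) ^+ n :> F.
Proof.
rewrite -[- r.+1%:R]sub0r -(sum_bin_diff_pow r 0 (leqnn n)) big_distrr.
by apply: eq_bigr => l _ /=; rewrite -stirling2E fact_addn; ring.
Qed.

Lemma sum_stirling2S_fact r n :
  \sum_(0 <= l < n.+1) stirling2 n.+1 l.+1 * (-1) ^+ l * ((l + r)`!)%:R
  = r`!%:R * (- r%:R) ^+ n :> F.
Proof.
have -> : - r%:R = 1 - r.+1%:R :> F by rewrite -addn1 natrD; ring.
rewrite -(sum_bin_diff_pow r 1 (leqnn n)) big_distrr; apply: eq_bigr => l _.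
have lS_neq0 : l.+1%:R != 0 :> F by rewrite pnatr_eq0.
have stirS : stirling2 n.+1 l.+1 * (-1) ^+ l * l`!%:R = diff_pow l n (1 : F).
  apply: (mulfI lS_neq0); apply: oppr_inj.
  have := stirling2E n.+1 l.+1; rewrite diff_powS mul0r sub0r add0r factS natrM.
  by move=> <-; rewrite exprS /=; ring.
by rewrite /= fact_addn -stirS; ring.
Qed.

End Stirling.

Theorem mainTheorem12 (R : realType) (p1 p2 r : nat) (k1 k2 : int) (x1 x2 : R[i]) :
  let LHS :=
    \sum_(0 <= j1 < p1.+1) \sum_(0 <= j2 < p2.+1) \sum_(0 <= l < (j1 + j2).+1)
      'C(p1, j1)%:R * 'C(p2, j2)%:R
      * polyBernoulli k1 (p1 - j1) x1 * polyBernoulli k2 (p2 - j2) x2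
      * stirling2 (j1 + j2) l * (-1) ^+ l * ((l + r)`!)%:R in
  LHS = (r`!)%:R * polyBernoulli k1 p1 (x1 - r%:R - 1)
                 * polyBernoulli k2 p2 (x2 - r%:R - 1)
  /\
  LHS =
    \sum_(0 <= j1 < p1.+1) \sum_(0 <= j2 < p2.+1) \sum_(0 <= l < (j1 + j2).+1)
      'C(p1, j1)%:R * 'C(p2, j2)%:R
      * polyBernoulli k1 (p1 - j1) (x1 - 1) * polyBernoulli k2 (p2 - j2) (x2 - 1)
      * stirling2 (j1 + j2).+1 l.+1 * (-1) ^+ l * ((l + r)`!)%:R.
Proof.
move=> LHS.
have shiftSE (x : R[i]) : x + - r.+1%:R = x - r%:R - 1 by rewrite -addn1 natrD; ring.
have shiftE (x : R[i]) : x - 1 + - r%:R = x - r%:R - 1 by ring.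
have LHSE : LHS = r`!%:R * polyBernoulli k1 p1 (x1 - r%:R - 1)
                          * polyBernoulli k2 p2 (x2 - r%:R - 1).
  by rewrite /LHS (sum_bin_polyBernoulli2 (sum_stirling2_fact _ r)) !shiftSE.
split=> //.
by rewrite LHSE (sum_bin_polyBernoulli2 (sum_stirling2S_fact _ r)) !shiftE.
Qed.
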